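(* Let $X$, $\mathcal{B}$, $\Delta$ and the Gelfand transform $f\mapsto\hat f$ be as in the context (in particular $\mathcal{B}$ vanishes nowhere on $X$), and let $\mathcal{B}_c:=\{\varphi\in\mathcal{B}:\hat\varphi\in C_c(\Delta)\}$, where $C_c(\Delta)$ denotes the continuous compactly supported functions on $\Delta$. Then $\mathcal{B}_c$ is dense in $\mathcal{B}$ with respect to the supremum norm.
   Context: $X$ is a nonempty set and $\mathcal{B}$ is a real vector space of bounded functions $X\to\mathbb{R}$ closed under pointwise multiplication, pointwise max and min, with $f\wedge1\in\mathcal{B}$ for $f\in\mathcal{B}$. Assume that for every $x\in X$ there is $f\in\mathcal{B}$ with $f(x)\neq0$. $A(\mathcal{B})$ is the supremum-norm closure of $\mathcal{B}+i\mathcal{B}$, a commutative $C^\ast$-algebra with pointwise operations and complex conjugation as involution; $\Delta$ is its spectrum (nonzero continuous multiplicative linear functionals with the Gelfand topology), locally compact Hausdorff; $\hat a(\varphi)=\varphi(a)$ is the Gelfand transform, an isometric $^\ast$-isomorphism $A(\mathcal{B})\to C_0(\Delta)$. *)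

From mathcomp Require Import all_boot all_order all_algebra.
From mathcomp Require Import all_classical all_reals all_analysis.
From mathcomp Require Import complex.
Import Order.TTheory GRing.Theory Num.Theory.
Import numFieldTopology.Exports numFieldNormedType.Exports.

Set Implicit Arguments.
Unset Strict Implicit.
Unset Printing Implicit Defensive.

Local Open Scope classical_set_scope.
Local Open Scope ring_scope.

(* The complex numbers over a real field R, as a numClosedFieldType
   (so that it carries its canonical metric topology). *)
Definition Cplx (R : realType) : numClosedFieldType := R[i].

Definition cpx (R : realType) (r : R) : Cplx R := (r%:C)%C.

Section GelfandDefs.
Variables (R : realType) (X : Type).

Definition bounded_real_fun (f : X -> R) : Prop := exists M : R, forall x, `|f x| <= M.

Definition AB (B : set (X -> R)) : set (X -> Cplx R) :=
  [set h | forall e : R, 0 < e ->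
     exists f g, [/\ B f, B g &
       forall x, `|h x - (cpx (f x) + 'i * cpx (g x))| <= cpx e]].

(* A functional is represented by a total map on all
   complex functions on X which is 0 outside A(B) (normalization, so that
   characters are in bijection with functionals on A(B)). *)
Definition is_character (B : set (X -> R)) (chi : (X -> Cplx R) -> Cplx R) : Prop :=
  [/\ forall a b (c : Cplx R), AB B a -> AB B b ->
        chi (fun x => c * a x + b x) = c * chi a + chi b,
      forall a b, AB B a -> AB B b ->
        chi (fun x => a x * b x) = chi a * chi b,
      exists2 a, AB B a & chi a != 0,
      exists K : R, forall a (M : R), AB B a -> (forall x, `|a x| <= cpx M) ->
        `|chi a| <= cpx (K * M)
    & forall a, ~ AB B a -> chi a = 0].

(* The ambient space of functionals with the topology of pointwise
   convergence; its subspace topology on the spectrum is the Gelfand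
   (weak-* ) topology. *)
Definition functionals := {ptws (X -> Cplx R) -> Cplx R}.

Definition spectrum (B : set (X -> R)) : set functionals :=
  [set chi | is_character B chi].

Definition gelfand (phi : X -> R) : functionals -> Cplx R :=
  fun chi => chi (fun x => cpx (phi x)).

(* support of the Gelfand transform, as a subset of Delta: the closure in
   Delta (= ambient closure intersected with Delta) of its nonvanishing set *)
Definition gelfand_support (B : set (X -> R)) (phi : X -> R) : set functionals :=
  spectrum B `&` closure [set chi | spectrum B chi /\ gelfand phi chi != 0].

Definition Bc (B : set (X -> R)) : set (X -> R) :=
  [set phi | [/\ B phi,
     {within spectrum B, continuous (gelfand phi)}
   & compact (gelfand_support B phi)]].

End GelfandDefs.

(* Given f in B and e > 0, put phi = f - clamp_e f, where clamp_e truncates to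
   [-e, e], and w = min(|f|/e, 1).  Both lie in B, |f - phi| <= e, and
   phi * w = phi since phi vanishes where |f| <= e while w = 1 elsewhere.  Hence
   every character chi with chi(phi) <> 0 satisfies chi(w) = 1, so the support of
   the transform of phi lies in {chi in Delta | chi(w) = 1}.  Characters are
   contractive (|chi a|^n = |chi(a^n)| <= K |a|^n for all n), so this set is a
   closed subset of a Tychonoff product of compact boxes of C, hence compact. *)

From mathcomp Require Import all_boot all_order all_algebra.
From mathcomp Require Import all_classical all_reals all_analysis.
From mathcomp Require Import complex ring lra.
Import Order.TTheory GRing.Theory Num.Theory.
Import numFieldTopology.Exports numFieldNormedType.Exports.

Set Implicit Arguments.
Unset Strict Implicit.
Unset Printing Implicit Defensive.

Local Open Scope classical_set_scope.
Local Open Scope ring_scope.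

Section RealEmbedding.
Variable R : realType.
Implicit Types r s : R.

Lemma cpx0 : cpx (0 : R) = 0. Proof. exact: rmorph0. Qed.
Lemma cpx1 : cpx (1 : R) = 1. Proof. exact: rmorph1. Qed.
Lemma cpxD r s : cpx (r + s) = cpx r + cpx s. Proof. exact: rmorphD. Qed.
Lemma cpxB r s : cpx (r - s) = cpx r - cpx s. Proof. exact: rmorphB. Qed.
Lemma cpxM r s : cpx (r * s) = cpx r * cpx s. Proof. exact: rmorphM. Qed.
Lemma cpxX r n : cpx (r ^+ n) = cpx r ^+ n. Proof. exact: rmorphXn. Qed.
Lemma cpx_le r s : (cpx r <= cpx s) = (r <= s). Proof. exact: lecR. Qed.
Lemma cpx_lt r s : (cpx r < cpx s) = (r < s). Proof. exact: ltcR. Qed.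

Lemma normr_cpx r : `|cpx r| = cpx `|r|.
Proof. by rewrite normc_def /= expr0n addr0 sqrtr_sqr. Qed.

Lemma continuous_cpx : continuous (@cpx R).
Proof.
move=> r; apply/cvgrPdist_lt => e e0.
have [s s0 ->] : exists2 s, 0 < s & e = cpx s.
  move: e0; rewrite ltcE /= => /andP[/eqP e_real s0].
  by exists (complex.Re e) => //; case: e e_real {s0} => ? ? /= ->.
near=> t; rewrite -cpxB normr_cpx cpx_lt.
by near: t; exact: (nbhsx_ballx r s s0).
Unshelve. all: by end_near.
Qed.
End RealEmbedding.

Definition complex_box {R : realType} (r : R) : set (Cplx R) :=
  (fun p : R * R => cpx p.1 + 'i * cpx p.2) @` (`[- r, r] `*` `[- r, r]).

Lemma compact_complex_box (R : realType) (r : R) : compact (complex_box r).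
Proof.
apply: continuous_compact; last by apply: compact_setX; exact: segment_compact.
apply: continuous_subspaceT => p.
apply: cvgD; first exact: continuous_comp cvg_fst (@continuous_cpx R _).
apply: cvgM; first exact: cvg_cst.
exact: continuous_comp cvg_snd (@continuous_cpx R _).
Qed.

Lemma complex_box_normr_le {R : realType} (r : R) (z : Cplx R) :
  `|z| <= cpx r -> complex_box r z.
Proof.
move=> zr; have part_le (u : R) : `|u|%:C%C <= `|z| -> u \in `[- r, r].
  by move=> uz; rewrite in_itv /= -ler_norml -cpx_le; exact: le_trans zr.
exists (complex.Re z, complex.Im z); last by rewrite /cpx -complexiE [RHS]complexE mulrC.
split; apply: part_le; first exact: normc_ge_Re.
rewrite -normrN -ReiNIm; apply: le_trans (normc_ge_Re _) _.
by rewrite normrM normCi mulr1.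
Qed.

Lemma closed_forall (T : topologicalType) (I : Type) (P : I -> set T) :
  (forall i, closed (P i)) -> closed [set x | forall i, P i x].
Proof.
move=> cP; have -> : [set x | forall i, P i x] = \bigcap_(i in setT) P i.
  by apply/seteqP; split=> x Px i //; exact: Px.
by apply: closed_bigI => i _; exact: cP.
Qed.

Lemma closed_normr_le (K : numFieldType) (m : K) :
  m \is Num.real -> closed [set z : K | `|z| <= m].
Proof.
move=> m_real z z_cl; apply/negPn/negP => z_out.
have mz : m < `|z| by rewrite real_ltNge // realE normr_ge0 orbT.
have mz_pos : 0 < `|z| - m by rewrite subr_gt0.
have [y [/= ym]] := z_cl _ (nbhsx_ballx z (`|z| - m) mz_pos).
rewrite -ball_normE /= => zy.
have : `|z| < m + (`|z| - m).
  rewrite -[in X in X < _](subrK y z); apply: le_lt_trans (ler_normD _ _) _.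
  by rewrite addrC ler_ltD.
by rewrite addrC subrK ltxx.
Qed.

Lemma closed_fun_eq (T : topologicalType) (K : numFieldType) (F G : T -> K) :
  continuous F -> continuous G -> closed [set x | F x = G x].
Proof.
move=> cF cG; have -> : [set x | F x = G x] = (F \- G) @^-1` [set z | `|z| <= 0].
  by apply/seteqP; split=> x /=; rewrite normr_le0 subr_eq0 => /eqP.
apply: preimage_closed; last exact: closed_normr_le.
by move=> x _; apply: cvgB; [exact: cF | exact: cG].
Qed.

Lemma le_of_exprS_le_scaled (R : realType) (t M K : R) : 0 <= M ->
  (forall n, t ^+ n.+1 <= K * M ^+ n.+1) -> t <= M.
Proof.
move=> M0 tM_bound; rewrite leNgt; apply/negP => Mt.
have t0 : 0 < t := le_lt_trans M0 Mt.
pose q := M / t.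
have q_lt1 : `|q| < 1.
  by rewrite ger0_norm ?divr_ge0 ?(ltW t0) // ltr_pdivrMr // mul1r.
have : (fun n => K * q ^+ n) @ \oo --> 0.
  by rewrite -(mulr0 K); apply: cvgM; [exact: cvg_cst | exact: cvg_expr].
move=> /cvgr_lt /(_ _ ltr01) [N _ /(_ N.+1 (leqnSn N))] /=.
apply/negP; rewrite -leNgt -(ler_pM2r (exprn_gt0 N.+1 t0)) mul1r -mulrA.
by rewrite -exprMn divfK ?gt_eqF.
Qed.

Definition clamp {R : realDomainType} (e y : R) := Num.max (Num.min y e) (- e).

Lemma normr_clamp_le (R : realFieldType) (e y : R) : 0 <= e -> `|clamp e y| <= e.
Proof.
move=> e0; rewrite /clamp ler_norml le_max lexx orbT ge_max ge_min lexx orbT /=.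
by rewrite (le_trans _ e0) // oppr_le0.
Qed.

Lemma sub_clamp_mul_cutoff (R : realFieldType) (e y : R) : 0 < e ->
  (y - clamp e y) * Num.min (`|y| / e) 1 = y - clamp e y.
Proof.
move=> e0; have [ye|ey] := leP `|y| e.
  move: ye; rewrite ler_norml => /andP[ey ye].
  by rewrite /clamp (min_idPl ye) (max_idPl ey) subrr mul0r.
by rewrite (min_idPr _) ?mulr1 // ler_pdivlMr // mul1r ltW.
Qed.

Record stone_algebra {R : realType} {X : Type} (B : set (X -> R)) : Prop := {
  stone0 : B (fun _ => 0);
  stoneD : forall f g, B f -> B g -> B (fun x => f x + g x);
  stoneZ : forall (c : R) f, B f -> B (fun x => c * f x);
  stone_bounded : forall f, B f -> bounded_real_fun f;
  stoneM : forall f g, B f -> B g -> B (fun x => f x * g x);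
  stone_max : forall f g, B f -> B g -> B (fun x => Num.max (f x) (g x));
  stone_min : forall f g, B f -> B g -> B (fun x => Num.min (f x) (g x));
  stone_min1 : forall f, B f -> B (fun x => Num.min (f x) 1) }.

Section StoneAlgebra.
Variables (R : realType) (X : Type) (B : set (X -> R)).
Hypothesis hB : stone_algebra B.

Lemma stoneN f : B f -> B (fun x => - f x).
Proof. by move=> /(stoneZ hB (-1)); under eq_fun do rewrite mulN1r. Qed.

Lemma stoneB f g : B f -> B g -> B (fun x => f x - g x).
Proof. by move=> Bf /stoneN; exact: stoneD. Qed.

Lemma stone_normr f : B f -> B (fun x => `|f x|).
Proof.
by move=> Bf; have := stone_max hB Bf (stoneN Bf); under eq_fun do rewrite maxrN.
Qed.

Lemma stone_min_cst f (e : R) : 0 < e -> B f -> B (fun x => Num.min (f x) e).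
Proof.
move=> e0 /(stoneZ hB e^-1) /(stone_min1 hB) /(stoneZ hB e).
by congr B; apply: funext => x; rewrite minr_pMr ?ltW // mulr1 mulVKf ?gt_eqF.
Qed.

Lemma stone_clamp f (e : R) : 0 < e -> B f -> B (fun x => clamp e (f x)).
Proof.
move=> e0 /(stone_min_cst e0) /stoneN /(stone_min_cst e0) /stoneN.
by under eq_fun do rewrite oppr_min opprK.
Qed.

Lemma stone_cutoff f (e : R) : B f -> B (fun x => Num.min (`|f x| / e) 1).
Proof.
move=> /stone_normr /(stoneZ hB e^-1) /(stone_min1 hB).
by under eq_fun do rewrite mulrC.
Qed.

Definition complexify (f : X -> R) : X -> Cplx R := fun x => cpx (f x).

Lemma AB_complexify f : B f -> AB B (complexify f).
Proof.
move=> Bf e e0; exists f, (fun _ => 0); split => //; first exact: stone0.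
by move=> x; rewrite /complexify cpx0 mulr0 addr0 subrr normr0 -cpx0 cpx_le ltW.
Qed.

Lemma AB_bounded a : AB B a -> exists2 M, 0 <= M & forall x, `|a x| <= cpx M.
Proof.
have bound_ge0 f : B f -> exists2 M, 0 <= M & forall x, `|f x| <= M.
  move=> /(stone_bounded hB) [M fM]; exists `|M| => // x.
  exact: le_trans (fM x) (ler_norm _).
move=> /(_ 1 ltr01) [f [g [Bf Bg afg]]].
have [Mf Mf0 fMf] := bound_ge0 _ Bf; have [Mg Mg0 gMg] := bound_ge0 _ Bg.
exists (Mf + Mg + 1) => [|x]; first lra.
rewrite -[a x](subrK (cpx (f x) + 'i * cpx (g x))) !cpxD cpx1 addrC.
apply: le_trans (ler_normD _ _) (lerD _ (afg x)).
apply: le_trans (ler_normD _ _) _; rewrite normrM normCi mul1r !normr_cpx.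
by apply: lerD; rewrite cpx_le.
Qed.

Lemma AB_mul a b : AB B a -> AB B b -> AB B (fun x => a x * b x).
Proof.
move=> Aa Ab; have [Ma Ma0 aMa] := AB_bounded Aa; have [Mb Mb0 bMb] := AB_bounded Ab.
move=> e e0; pose d := Num.min 1 (e / (Ma + Mb + 1)).
have d0 : 0 < d by rewrite lt_min ltr01 divr_gt0 //; lra.
have d1 : d <= 1 by rewrite ge_min lexx.
have de : d * (Ma + Mb + 1) <= e.
  by rewrite -ler_pdivlMr ?ge_min ?lexx ?orbT //; lra.
have [f1 [g1 [Bf1 Bg1 ap]]] := Aa d d0; have [f2 [g2 [Bf2 Bg2 bq]]] := Ab d d0.
exists (fun x => f1 x * f2 x - g1 x * g2 x), (fun x => f1 x * g2 x + g1 x * f2 x).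
split=> [||x].
- by apply: stoneB; exact: (stoneM hB).
- by apply: (stoneD hB); exact: (stoneM hB).
move: (ap x) (bq x); set p := cpx (f1 x) + _; set q := cpx (f2 x) + _ => apx bqx.
have -> : cpx (f1 x * f2 x - g1 x * g2 x) + 'i * cpx (f1 x * g2 x + g1 x * f2 x)
    = p * q.
  have -> : p * q = cpx (f1 x) * cpx (f2 x) + 'i ^+ 2 * (cpx (g1 x) * cpx (g2 x))
      + 'i * (cpx (f1 x) * cpx (g2 x) + cpx (g1 x) * cpx (f2 x)) by rewrite /p /q; ring.
  by rewrite sqrCi cpxB cpxD !cpxM; ring.
have q_le : `|q| <= cpx (Mb + d).
  by rewrite -(subKr (b x) q) cpxD (le_trans (ler_normB _ _)) ?lerD.
have -> : a x * b x - p * q = a x * (b x - q) + (a x - p) * q by ring.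
apply: le_trans (ler_normD _ _) _; rewrite !normrM.
apply: (@le_trans _ _ (cpx (Ma * d + d * (Mb + d)))); last by rewrite cpx_le; nra.
by rewrite cpxD !cpxM; apply: lerD; apply: ler_pM.
Qed.

Lemma AB_exprS a n : AB B a -> AB B (fun x => a x ^+ n.+1).
Proof.
move=> Aa; elim: n => [|n IH]; first by under eq_fun do rewrite expr1.
by under eq_fun do rewrite exprS; exact: AB_mul.
Qed.

Lemma character_exprS chi a n : is_character B chi -> AB B a ->
  chi (fun x => a x ^+ n.+1) = chi a ^+ n.+1.
Proof.
case=> _ chiM _ _ _ Aa; elim: n => [|n IH]; first by under eq_fun do rewrite expr1.
under eq_fun do rewrite exprS.
by rewrite chiM ?IH ?exprS //; exact: AB_exprS.
Qed.

Lemma character_contractive chi a (M : R) : inhabited X -> is_character B chi ->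
  AB B a -> (forall x, `|a x| <= cpx M) -> `|chi a| <= cpx M.
Proof.
move=> [x0] chi_char Aa aM.
have M0 : 0 <= M by rewrite -cpx_le cpx0 (le_trans _ (aM x0)).
have [_ _ _ [K chiK] _] := chi_char.
have [t chi_t] : exists t, `|chi a| = cpx t by eexists; exact: normc_def.
rewrite chi_t cpx_le; apply: (le_of_exprS_le_scaled (K := K)) => // n.
rewrite -cpx_le cpxX -chi_t -normrX -(character_exprS n chi_char Aa).
apply: chiK; first exact: AB_exprS.
by move=> x; rewrite normrX cpxX lerXn2r ?nnegrE // -cpx0 cpx_le.
Qed.

Definition sup_bound (a : X -> Cplx R) : R :=
  if pselect (exists2 M, 0 <= M & forall x, `|a x| <= cpx M) is left bounded
  then s2val (cid2 bounded) else 0.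

Lemma sup_bound_ge0 a : 0 <= sup_bound a.
Proof. by rewrite /sup_bound; case: pselect => // ?; case: cid2. Qed.

Lemma normr_le_sup_bound a : AB B a -> forall x, `|a x| <= cpx (sup_bound a).
Proof.
move=> /AB_bounded bounded; rewrite /sup_bound.
by case: pselect => // {}bounded; case: cid2.
Qed.

(* Contractivity, automatic for characters of a nonempty X (see
   character_contractive), is built in so that the set sits in a product of
   compact boxes. *)
Definition characters_one_at (w : X -> Cplx R) : set (functionals R X) :=
  [set chi | forall a b c, AB B a -> AB B b ->
     chi (fun x => c * a x + b x) = c * chi a + chi b] `&`
  [set chi | forall a b, AB B a -> AB B b ->
     chi (fun x => a x * b x) = chi a * chi b] `&`
  [set chi | chi w = 1] `&`
  [set chi | forall a M, AB B a -> (forall x, `|a x| <= cpx M) ->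
     `|chi a| <= cpx M] `&`
  [set chi | forall a, ~ AB B a -> chi a = 0].

Lemma closed_characters_one_at w : closed (characters_one_at w).
Proof.
have ev a : continuous (fun chi : functionals R X => chi a) :=
  @proj_continuous _ (fun=> Cplx R) a.
apply: closedI; [apply: closedI; [apply: closedI; [apply: closedI |] |] |].
- apply: closed_forall => a; apply: closed_forall => b; apply: closed_forall => c.
  do 2 apply: closed_forall => _; apply: closed_fun_eq => // chi.
  apply: (continuousD _ (ev b chi)).
  exact: (continuousM (@cst_continuous _ _ c chi) (ev a chi)).
- apply: closed_forall => a; apply: closed_forall => b.
  do 2 apply: closed_forall => _; apply: closed_fun_eq => // chi.
  exact: (continuousM (ev a chi) (ev b chi)).
- apply: (@closed_fun_eq _ _ (fun chi : functionals R X => chi w) (fun=> 1)).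
    exact: ev.
  exact: cst_continuous.
- apply: closed_forall => a; apply: closed_forall => M.
  do 2 apply: closed_forall => _.
  have M_real : cpx M \is Num.real by apply/complex_realP; exists M.
  exact: (continuous_closedP (fun chi : functionals R X => chi a)).1 (ev a) _
    (closed_normr_le M_real).
- apply: closed_forall => a; apply: closed_forall => _.
  apply: (@closed_fun_eq _ _ (fun chi : functionals R X => chi a) (fun=> 0)).
    exact: ev.
  exact: cst_continuous.
Qed.

Lemma characters_one_at_sub_spectrum w : AB B w ->
  characters_one_at w `<=` spectrum B.
Proof.
move=> Aw chi [[[[chiD chiM] chiw] chi_contr] chi_out]; split => //.
- by exists w; rewrite // chiw oner_neq0.
- by exists 1 => a M Aa aM; rewrite mul1r; exact: chi_contr.
Qed.

Lemma compact_characters_one_at w : compact (characters_one_at w).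
Proof.
pose boxes : set (functionals R X) :=
  [set chi | forall a, complex_box (sup_bound a) (chi a)].
have boxesC : compact boxes.
  exact: (@tychonoff (X -> Cplx R) (fun=> Cplx R) (fun a => complex_box (sup_bound a))
    (fun a => @compact_complex_box R (sup_bound a))).
apply: (subclosed_compact (closed_characters_one_at (w := w)) boxesC).
move=> chi [[_ chi_contr] chi_out] a; apply: complex_box_normr_le.
have [Aa|Aa] := pselect (AB B a); first exact/chi_contr/normr_le_sup_bound.
by rewrite chi_out // normr0 -cpx0 cpx_le sup_bound_ge0.
Qed.

Lemma Bc_of_mul_eq phi w : inhabited X -> B phi -> B w ->
  (forall x, phi x * w x = phi x) -> Bc B phi.
Proof.
move=> inhX Bphi Bw phiw.
have Aphi := AB_complexify Bphi; have Aw := AB_complexify Bw.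
pose nonzero := [set chi | spectrum B chi /\ gelfand phi chi != 0].
have nonzero_one_at : nonzero `<=` characters_one_at (complexify w).
  move=> chi [chi_char phi_ne0]; have [chiD chiM _ _ chi_out] := chi_char.
  split; [split; [split; [split|]|]|] => //; last first.
    by move=> a M; exact: character_contractive.
  have := chiM _ _ Aphi Aw.
  have -> : (fun x => complexify phi x * complexify w x) = complexify phi.
    by apply: funext => x; rewrite /complexify -cpxM phiw.
  move/eqP; rewrite -subr_eq0 -{1}[chi (complexify phi)]mulr1 -mulrBr mulf_eq0.
  by rewrite (negbTE phi_ne0) subr_eq0 => /eqP.
have support_one_at : closure nonzero `<=` characters_one_at (complexify w).
  by move=> chi /(closureS nonzero_one_at); exact: closed_characters_one_at.
split=> //; first exact/continuous_subspaceT/(@proj_continuous _ (fun=> Cplx R)).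
have -> : gelfand_support B phi = closure nonzero.
  apply/seteqP; split=> chi; first by case.
  by move=> nz_chi; split=> //; exact/(characters_one_at_sub_spectrum Aw)/support_one_at.
exact: (subclosed_compact (@closed_closure _ nonzero)
  (compact_characters_one_at (w := complexify w)) support_one_at).
Qed.
End StoneAlgebra.

Theorem mainTheorem7 (R : realType) (X : Type) (B : set (X -> R)) :
  inhabited X ->
  B (fun _ => 0) ->
  (forall f g, B f -> B g -> B (fun x => f x + g x)) ->
  (forall (c : R) f, B f -> B (fun x => c * f x)) ->
  (forall f, B f -> bounded_real_fun f) ->
  (forall f g, B f -> B g -> B (fun x => f x * g x)) ->
  (forall f g, B f -> B g -> B (fun x => Num.max (f x) (g x))) ->
  (forall f g, B f -> B g -> B (fun x => Num.min (f x) (g x))) ->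
  (forall f, B f -> B (fun x => Num.min (f x) 1)) ->
  (forall x, exists2 f, B f & f x != 0) ->
  forall f, B f -> forall e : R, 0 < e ->
    exists2 phi, Bc B phi & forall x, `|f x - phi x| <= e.
Proof.
move=> inhX B0 BD BZ Bbd BM Bmax Bmin Bmin1 _ f Bf e e0.
have hB : stone_algebra B by split.
exists (fun x => f x - clamp e (f x)); last first.
  by move=> x; rewrite opprB addrC subrK normr_clamp_le ?ltW.
have Bphi := stoneB hB Bf (stone_clamp hB e0 Bf).
apply: (Bc_of_mul_eq hB inhX Bphi (stone_cutoff hB e Bf)) => x.
exact: sub_clamp_mul_cutoff.
Qed.
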